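(* For all integers $m \ge 1$ and $n \ge 1$, $$\mathrm{Var}[\xi_{m,n}] = (m-1)\cdot S_{m,n}.$$
   Context: Let $m\ge 1$, $n\ge 1$ be integers and let $\{\alpha_1,\dots,\alpha_m\}$ be an alphabet of $m$ symbols. A random string is generated as follows: starting from the empty string, repeatedly append a symbol chosen uniformly at random from the alphabet (independently of all previous choices), and stop at the first moment the string ends with $n$ consecutive copies of $\alpha_1$. The random variable $\xi_{m,n}$ is the length of the resulting string. Let $G_{m,n}=(V,E)$ be the complete $m$-ary rooted tree of height $n$ (the root is at level $0$, every node at level $<n$ has exactly $m$ children, and there are $m^d$ nodes at level $d$ for $0\le d\le n$; $V$ includes the root). For $v\in V$, $\pi(v)\subseteq E$ denotes the set of edges of the unique path from $v$ to the root. Define $S_{m,n} := \sum_{(a,b)\in V\times V} |\pi(a)\cap\pi(b)|$ (the sum over all ordered pairs of nodes, including pairs with $a=b$). *)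

From Stdlib Require Import Reals.
From Coquelicot Require Import Coquelicot.
From mathcomp Require Import all_boot.

Set Implicit Arguments.
Unset Strict Implicit.
Unset Printing Implicit Defensive.
Local Open Scope nat_scope.

(* Alphabet {alpha_1,...,alpha_m} is 'I_m; alpha_1 is the symbol with value 0. *)

Definition ends_with_run (n : nat) (s : seq nat) : bool :=
  (n <= size s) && all (fun x => x == 0) (drop (size s - n) s).

Definition first_stop (n : nat) (s : seq nat) : bool :=
  ends_with_run n s && all (fun j => ~~ ends_with_run n (take j s)) (iota 0 (size s)).

(* P[xi_{m,n} = k]: each string of length k is produced with probability m^-k *)
Definition xi_pmf (m n k : nat) : R :=
  Rdiv (INR #|[set w : k.-tuple 'I_m | first_stop n (map val w)]|) (pow (INR m) k).

(* Complete m-ary tree of height n: nodes are words over 'I_m of length <= n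
   (root = empty word, children of v are rcons v i).  The edge between a node
   v of level j+1 and its parent is the pair (parent, child).
   pi(v) = edges on the path from v to the root. *)
Definition path_edges (m : nat) (v : seq 'I_m) : seq (seq 'I_m * seq 'I_m) :=
  [seq (take j v, take j.+1 v) | j <- iota 0 (size v)].

(* |pi(a) ∩ pi(b)| (path_edges a is duplicate-free) *)
Definition common_edges (m : nat) (a b : seq 'I_m) : nat :=
  size [seq e <- path_edges a | e \in path_edges b].

Definition S_tree (m n : nat) : nat :=
  \sum_(d1 < n.+1) \sum_(d2 < n.+1)
    \sum_(a : d1.-tuple 'I_m) \sum_(b : d2.-tuple 'I_m)
      common_edges (tval a) (tval b).

From Stdlib Require Import Reals Lra Psatz.
From Coquelicot Require Import Coquelicot.
From mathcomp Require Import all_boot zify.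

Set Implicit Arguments.
Unset Strict Implicit.
Unset Printing Implicit Defensive.
Local Open Scope nat_scope.

(* While generating, only the length j of the current trailing run of
   alpha_1 matters: from a state j < n the next letter leads to j+1 with
   probability 1/m and back to 0 with probability (m-1)/m, and reaching n
   stops the process.  Counting words letter by letter, the probabilities
   a_K(j) of being alive in state j after K letters and p_K = P[xi = K] obey
   exactly these transition rules.  For every F with
     F_K(j) = (m-1)/m F_{K+1}(0) + 1/m F_{K+1}(j+1)      (j < n)
   the quantity sum_{k<=K} p_k F_k(n) + sum_j a_K(j) F_K(j) is then constant,
   and since the alive mass decays geometrically, sum_k p_k F_k(n) = F_0(0)
   whenever F grows polynomially in K.  With D_j = m + ... + m^j and H = D_n,
   the functions K + H - D_j and (K - D_j)^2 + (m-1)(S_{m,n} - S_{m,j}) are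
   of this kind, giving E[xi] = H and Var[xi] = (m-1) S_{m,n}; the latter
   uses the recursion S_{m,j+1} = m S_{m,j} + m (1 + m + ... + m^j)^2 obtained
   by splitting the tree at its root. *)

Section TupleSums.
Variable T : finType.

Lemma sum_tuple_const K c : \sum_(t : K.-tuple T) c = #|T| ^ K * c.
Proof. by rewrite sum_nat_const card_tuple. Qed.

Lemma sum_tuple0 (F : seq T -> nat) : \sum_(w : 0.-tuple T) F w = F [::].
Proof.
rewrite (eq_bigr (fun _ => F [::])) => [|w _]; last by rewrite tuple0.
by rewrite sum_tuple_const mul1n.
Qed.

Lemma sum_tuple_cons K (F : seq T -> nat) :
  \sum_(t : K.+1.-tuple T) F t = \sum_(x : T) \sum_(w : K.-tuple T) F (x :: w).
Proof.
rewrite pair_big /=.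
pose cons_tuple (p : T * K.-tuple T) : K.+1.-tuple T := [tuple of p.1 :: p.2].
rewrite (reindex cons_tuple) //=.
exists (fun t : K.+1.-tuple T => (thead t, [tuple of behead t])) => [[x w] _|t _].
  by congr pair; apply: val_inj.
by case/tupleP: t => x w; apply: val_inj.
Qed.

Lemma sum_tuple_rev K (F : seq T -> nat) :
  \sum_(t : K.-tuple T) F t = \sum_(t : K.-tuple T) F (rev t).
Proof.
rewrite (reindex_inj (h := fun t : K.-tuple T => [tuple of rev t])) //.
by move=> t1 t2 /(congr1 val) /= /(congr1 rev); rewrite !revK => /val_inj.
Qed.

Lemma sum_tuple_rcons K (F : seq T -> nat) :
  \sum_(t : K.+1.-tuple T) F t = \sum_(w : K.-tuple T) \sum_(x : T) F (rcons w x).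
Proof.
rewrite sum_tuple_rev (sum_tuple_cons _ (fun s => F (rev s))) exchange_big /=.
rewrite (sum_tuple_rev K (fun w => \sum_(x : T) F (rcons w x))).
by apply: eq_bigr => w _; apply: eq_bigr => x _; rewrite rev_cons.
Qed.

End TupleSums.

(* The only state of the generation process that matters is [run s], the
   length of the trailing block of zeros (copies of alpha_1) of s. *)
Definition run_step (r x : nat) : nat := if x == 0 then r.+1 else 0.
Definition run (s : seq nat) : nat := foldl run_step 0 s.

Lemma run_rcons s x : run (rcons s x) = run_step (run s) x.
Proof. by rewrite /run foldl_rcons. Qed.

Lemma ends_with_run_rcons n s x :
  ends_with_run n.+1 (rcons s x) = (x == 0) && ends_with_run n s.
Proof.
rewrite /ends_with_run size_rcons ltnS subSS drop_rcons ?leq_subr // all_rcons.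
by case: (x == 0); case: (n <= size s).
Qed.

Lemma ends_with_runE n s : ends_with_run n s = (n <= run s).
Proof.
elim/last_ind: s n => [|s x IH] [|n] //.
  by rewrite /ends_with_run subn0 drop_size.
by rewrite ends_with_run_rcons IH run_rcons /run_step; case: (x == 0).
Qed.

Definition alive (n : nat) (s : seq nat) : bool :=
  all (fun j => ~~ ends_with_run n (take j s)) (iota 0 (size s).+1).

Lemma alive_rcons n s x :
  alive n (rcons s x) = alive n s && (run (rcons s x) < n).
Proof.
rewrite /alive size_rcons -[(size s).+2]addn1 iotaD all_cat add0n; congr andb.
  apply: eq_in_all => j; rewrite mem_iota add0n ltnS => le_j.
  by rewrite -cats1 takel_cat.
by rewrite /= andbT -(size_rcons s x) take_size ends_with_runE -ltnNge.
Qed.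

Lemma first_stop_rcons n s x :
  first_stop n (rcons s x) = (n <= run (rcons s x)) && alive n s.
Proof.
rewrite /first_stop /alive size_rcons ends_with_runE; congr andb.
apply: eq_in_all => j; rewrite mem_iota add0n ltnS => le_j.
by rewrite -cats1 takel_cat.
Qed.

Lemma alive_run n s : alive n s -> run s < n.
Proof.
move=> /allP /(_ (size s)); rewrite mem_iota add0n ltnS leqnn take_size.
by rewrite ends_with_runE -ltnNge => /(_ isT).
Qed.

Section Counts.
Variables (m' n : nat).
Hypothesis n_gt0 : 0 < n.
Local Notation m := m'.+1.

Definition alive_count (K j : nat) : nat :=
  \sum_(w : K.-tuple 'I_m) (alive n (map val w) && (run (map val w) == j)).

Definition stop_count (K : nat) : nat :=
  \sum_(w : K.-tuple 'I_m) (first_stop n (map val w) : nat).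

Lemma card_first_stop K :
  #|[set w : K.-tuple 'I_m | first_stop n (map val w)]| = stop_count K.
Proof.
rewrite -sum1_card big_mkcond /=; apply: eq_bigr => w _.
by rewrite inE; case: (first_stop _ _).
Qed.

(* Exactly one letter (alpha_1) extends the run, the other m - 1 reset it. *)
Lemma sum_letter_eq0 (b : bool) : \sum_(x : 'I_m) ((val x == 0) && b : nat) = b.
Proof. by rewrite big_ord_recl /= big1 ?addn0. Qed.

Lemma sum_letter_neq0 (b : bool) : \sum_(x : 'I_m) ((val x != 0) && b : nat) = m' * b.
Proof.
rewrite big_ord_recl /= add0n (eq_bigr (fun _ => b : nat)) //.
by rewrite sum_nat_const card_ord.
Qed.

Lemma sum_run_value (b : bool) r :
  (b -> r < n) -> \sum_(j < n) (b && (r == j) : nat) = b.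
Proof.
case: b => [/(_ isT) lt_rn|_]; last by rewrite big1.
rewrite (bigD1 (Ordinal lt_rn)) //= eqxx big1 ?addn0 // => j neq_j.
by case: eqP => // r_j; case/eqP: neq_j; apply: val_inj.
Qed.

Lemma alive_count0 j : alive_count 0 j = (j == 0).
Proof.
rewrite /alive_count (sum_tuple0 (fun w : seq 'I_m =>
  (alive n (map val w) && (run (map val w) == j) : nat))) /=.
by rewrite /alive /= ends_with_runE /run /= -ltnNge n_gt0 eq_sym.
Qed.

Lemma stop_count0 : stop_count 0 = 0.
Proof.
rewrite /stop_count (sum_tuple0 (fun w : seq 'I_m => (first_stop n (map val w) : nat))).
by rewrite /= /first_stop ends_with_runE /run /= leqn0 andbT; case: eqP n_gt0 => // ->.
Qed.

Lemma alive_count_S0 K : alive_count K.+1 0 = m' * \sum_(j < n) alive_count K j.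
Proof.
rewrite /alive_count (sum_tuple_rcons _ (fun w : seq 'I_m =>
  (alive n (map val w) && (run (map val w) == 0) : nat))).
rewrite [in RHS]exchange_big big_distrr /=; apply: eq_bigr => w _.
rewrite sum_run_value; last by move/alive_run.
rewrite -sum_letter_neq0; apply: eq_bigr => x _.
rewrite map_rcons alive_rcons run_rcons /run_step.
by case: (val x == 0); rewrite /= ?andbF // n_gt0 !andbT.
Qed.

Lemma alive_count_SS K j : j.+1 < n -> alive_count K.+1 j.+1 = alive_count K j.
Proof.
move=> lt_jn; rewrite /alive_count (sum_tuple_rcons _ (fun w : seq 'I_m =>
  (alive n (map val w) && (run (map val w) == j.+1) : nat))).
apply: eq_bigr => w _; rewrite -sum_letter_eq0; apply: eq_bigr => x _.
rewrite map_rcons alive_rcons run_rcons /run_step.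
case: (val x == 0); rewrite /= ?andbF // eqSS.
by case: eqP => [->|_]; rewrite ?andbF // lt_jn andbT.
Qed.

Lemma stop_count_S K : stop_count K.+1 = alive_count K n.-1.
Proof.
rewrite /stop_count /alive_count (sum_tuple_rcons _ (fun w : seq 'I_m =>
  (first_stop n (map val w) : nat))).
apply: eq_bigr => w _; rewrite -sum_letter_eq0; apply: eq_bigr => x _.
rewrite map_rcons first_stop_rcons run_rcons /run_step.
case: (val x == 0) => /=; last by rewrite leqn0; case: eqP n_gt0 => // ->.
case alive_w: (alive n _); rewrite ?andbF //= andbT.
have := alive_run alive_w; move: (run _) => r lt_rn.
by congr nat_of_bool; apply/idP/eqP; lia.
Qed.

End Counts.

(* The tree sum S_{m,n} satisfies S_{m,n+1} = m S_{m,n} + m (1 + m + ... + m^n)^2: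
   two nodes of depths i+1, j+1 share an edge only if they lie below the same
   child of the root, and then they share that edge plus their common edges
   in the subtree of height n hanging below it. *)
Section Tree.
Variable m : nat.

Definition geom_sum (i : nat) : nat := \sum_(t < i) m ^ t.

Lemma geom_sum0 : geom_sum 0 = 0.
Proof. exact: big_ord0. Qed.

Lemma geom_sumS i : geom_sum i.+1 = 1 + m * geom_sum i.
Proof.
rewrite /geom_sum big_ord_recl expn0 big_distrr; congr addn.
by apply: eq_bigr => t _; rewrite expnS.
Qed.

Lemma geom_sum_mono : {homo geom_sum : j k / j <= k}.
Proof.
by apply: homo_leq leqnn leq_trans _ => i; rewrite /geom_sum big_ord_recr leq_addr.
Qed.

Lemma geom_sum_step_le j n : 0 < m -> j < n -> m * geom_sum j + 1 <= m * geom_sum n.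
Proof.
move=> m_gt0 lt_jn; rewrite addnC -geom_sumS.
exact: leq_trans (geom_sum_mono lt_jn) (leq_pmull _ m_gt0).
Qed.

(* Edges of the subtree below the child x of the root, seen from the root. *)
Definition shift_edge (x : 'I_m) (e : seq 'I_m * seq 'I_m) := (x :: e.1, x :: e.2).

Lemma shift_edge_inj x : injective (shift_edge x).
Proof. by move=> [a b] [c d] [-> ->]. Qed.

Lemma path_edges_cons x (a : seq 'I_m) :
  path_edges (x :: a) = ([::], [:: x]) :: map (shift_edge x) (path_edges a).
Proof.
rewrite /path_edges /= take0.
have -> : iota 1 (size a) = map (addn 1) (iota 0 (size a)) by rewrite -iotaDl.
by rewrite -!map_comp.
Qed.

Lemma common_edges_nil_r (a : seq 'I_m) : common_edges a [::] = 0.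
Proof. by rewrite /common_edges /path_edges /= filter_pred0. Qed.

Definition edges_below (y : 'I_m) (l : seq (seq 'I_m * seq 'I_m)) :=
  ([::], [:: y]) :: map (shift_edge y) l.

Lemma root_edge_below x y l : (([::], [:: x]) \in edges_below y l) = (x == y).
Proof.
rewrite in_cons xpair_eqE eqseq_cons eqxx andbT /=.
by case: mapP => [[e _ []] //|_]; rewrite orbF.
Qed.

Lemma shift_edge_below x y e l :
  (shift_edge x e \in edges_below y l) = (x == y) && (e \in l).
Proof.
rewrite in_cons /=; case: (x =P y) => [<-|neq_xy] /=.
  by rewrite mem_map //; exact: shift_edge_inj.
by apply/negP => /mapP [e' _ [/neq_xy]].
Qed.

Lemma common_edges_cons x y (a b : seq 'I_m) :
  common_edges (x :: a) (y :: b) = if x == y then (common_edges a b).+1 else 0.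
Proof.
rewrite /common_edges !path_edges_cons -/(edges_below y _) /= root_edge_below.
rewrite filter_map (eq_filter (a2 := fun e => (x == y) && (e \in path_edges b))).
  by case: (x == y); rewrite /= size_map // filter_pred0.
by move=> e; rewrite /preim /= shift_edge_below.
Qed.

Definition level_pair_sum (d1 d2 : nat) : nat :=
  \sum_(a : d1.-tuple 'I_m) \sum_(b : d2.-tuple 'I_m) common_edges (tval a) (tval b).

Lemma level_pair_sum0l d2 : level_pair_sum 0 d2 = 0.
Proof. by rewrite /level_pair_sum big1 // => a _; rewrite big1 // => b _; rewrite tuple0. Qed.

Lemma level_pair_sum0r d1 : level_pair_sum d1 0 = 0.
Proof.
rewrite /level_pair_sum big1 // => a _; rewrite big1 // => b _.
by rewrite tuple0 common_edges_nil_r.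
Qed.

Lemma level_pair_sumSS i j :
  level_pair_sum i.+1 j.+1 = m * (level_pair_sum i j + m ^ i * m ^ j).
Proof.
have sum_const k c : \sum_(t : k.-tuple 'I_m) c = m ^ k * c.
  by rewrite sum_tuple_const card_ord.
rewrite /level_pair_sum (sum_tuple_cons _ (fun a =>
  \sum_(b : j.+1.-tuple 'I_m) common_edges a b)).
rewrite (eq_bigr (fun x => \sum_(a : i.-tuple 'I_m) \sum_(b : j.-tuple 'I_m)
  (common_edges a b).+1)) => [|x _].
  rewrite sum_nat_const card_ord -sum_const -big_split; congr muln.
  apply: eq_bigr => a _; rewrite -[m ^ j]muln1 -sum_const -big_split /=.
  by apply: eq_bigr => b _; rewrite addn1.
apply: eq_bigr => a _.
rewrite (sum_tuple_cons _ (fun b => common_edges (x :: a) b)) exchange_big /=.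
apply: eq_bigr => b _; rewrite (bigD1 x) //= common_edges_cons eqxx big1 ?addn0 //.
by move=> y neq_yx; rewrite common_edges_cons eq_sym (negbTE neq_yx).
Qed.

Lemma S_treeE n :
  S_tree m n = \sum_(d1 < n.+1) \sum_(d2 < n.+1) level_pair_sum d1 d2.
Proof. by []. Qed.

Lemma S_tree0 : S_tree m 0 = 0.
Proof. by rewrite S_treeE !big_ord1; exact: level_pair_sum0l. Qed.

Lemma S_tree_S n : S_tree m n.+1 = m * S_tree m n + m * geom_sum n.+1 ^ 2.
Proof.
rewrite !S_treeE big_ord_recl big1 ?add0n => [|d2 _]; last exact: level_pair_sum0l.
rewrite (eq_bigr (fun i : 'I_n.+1 =>
  m * \sum_(j < n.+1) (level_pair_sum i j + m ^ i * m ^ j))) => [|i _]; last first.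
  rewrite big_ord_recl level_pair_sum0r add0n big_distrr.
  by apply: eq_bigr => j _; rewrite level_pair_sumSS.
rewrite -big_distrr -mulnDr; congr muln.
rewrite (eq_bigr (fun i : 'I_n.+1 => \sum_(j < n.+1) level_pair_sum i j
  + m ^ i * geom_sum n.+1)) => [|i _]; last by rewrite big_split /= big_distrr.
by rewrite big_split /= -big_distrl.
Qed.

Lemma S_tree_mono : 0 < m -> {homo S_tree m : j k / j <= k}.
Proof.
move=> m_gt0; apply: homo_leq leqnn leq_trans _ => i.
by rewrite S_tree_S (leq_trans _ (leq_addr _ _)) // leq_pmull.
Qed.

End Tree.

Local Open Scope R_scope.

Fixpoint sumR (k : nat) (f : nat -> R) : R :=
  if k is k'.+1 then sumR k' f + f k' else 0.

Lemma sumR_ext k f g : (forall j, (j < k)%N -> f j = g j) -> sumR k f = sumR k g.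
Proof. by elim: k => [//|k IH] eq_fg /=; rewrite IH ?eq_fg // => j /ltnW /eq_fg. Qed.

Lemma sumR_plus k f g : sumR k (fun j => f j + g j) = sumR k f + sumR k g.
Proof. by elim: k => [|k IH] /=; [ring | rewrite IH; ring]. Qed.

Lemma sumR_minus k f g : sumR k (fun j => f j - g j) = sumR k f - sumR k g.
Proof. by elim: k => [|k IH] /=; [ring | rewrite IH; ring]. Qed.

Lemma sumR_scale k f c : sumR k (fun j => c * f j) = c * sumR k f.
Proof. by elim: k => [|k IH] /=; [ring | rewrite IH; ring]. Qed.

Lemma sumR_shift k f : sumR k.+1 f = f 0%N + sumR k (fun j => f j.+1).
Proof.
elim: k => [|k IH]; first by rewrite /=; ring.
have -> : sumR k.+2 f = sumR k.+1 f + f k.+1 by [].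
by rewrite IH /=; ring.
Qed.

Lemma sumR_le k f g : (forall j, (j < k)%N -> f j <= g j) -> sumR k f <= sumR k g.
Proof.
elim: k => [_|k IH le_fg] /=; first lra.
by apply: Rplus_le_compat; [apply: IH => j /ltnW /le_fg | exact: le_fg].
Qed.

Lemma sumR_eq0 k f : (forall j, (j < k)%N -> f j = 0) -> sumR k f = 0.
Proof. by elim: k => [//|k IH] f0 /=; rewrite IH ?f0 ?Rplus_0_r // => j /ltnW /f0. Qed.

Lemma sumR_ge0 k f : (forall j, (j < k)%N -> 0 <= f j) -> 0 <= sumR k f.
Proof. by move=> f_ge0; rewrite -(sumR_eq0 (k := k) (f := fun _ => 0)) //; exact: sumR_le. Qed.

Lemma INR_sum k (f : nat -> nat) : INR (\sum_(j < k) f j) = sumR k (fun j => INR (f j)).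
Proof. by elim: k => [|k IH]; rewrite ?big_ord0 // big_ord_recr plus_INR IH. Qed.

(* Polynomial growth is beaten by geometric decay: by the ratio test, since
   ((k+2)/(k+1))^2 = (1 + 1/(k+1))^2 tends to 1. *)
Lemma poly_geom_lim q : 0 <= q < 1 -> is_lim_seq (fun K => INR K.+1 ^ 2 * q ^ K) 0.
Proof.
move=> [q_ge0 q_lt1].
have pos k : 0 < INR k.+1 by apply: lt_0_INR; lia.
have inv_lim : is_lim_seq (fun k => / INR k.+1) 0.
  exact: (is_lim_seq_inv _ p_infty (proj1 (is_lim_seq_incr_1 INR p_infty) is_lim_seq_INR)).
have ratio : is_lim_seq (fun k => Rabs (INR k.+2 ^ 2 / INR k.+1 ^ 2)) 1.
  have := is_lim_seq_mult' _ _ _ _ (is_lim_seq_plus' _ _ _ _ (is_lim_seq_const 1) inv_lim)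
                              (is_lim_seq_plus' _ _ _ _ (is_lim_seq_const 1) inv_lim).
  rewrite Rplus_0_r Rmult_1_r; apply: is_lim_seq_ext => k.
  have := pos k; rewrite Rabs_pos_eq (S_INR k.+1) => [pos_k|]; first by field; lra.
  by apply: Rdiv_le_0_compat; [apply: pow2_ge_0 | apply: pow_lt].
have nz k : INR k.+1 ^ 2 <> 0 by apply: pow_nonzero; have := pos k; lra.
have q_in_disk : Rabs q < / 1 by rewrite Rinv_1 Rabs_pos_eq.
have := CV_disk_DAlembert _ q _ nz ratio (or_intror (conj R1_neq_R0 q_in_disk)).
by move=> /ex_series_lim_0 abs_lim; apply/is_lim_seq_abs_0.
Qed.

(* The run-length chain for the alphabet 'I_m (m = m'+1) and stopping run n
   (n = n'+1), in probabilities: [alive_prob K j] is the probability of being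
   alive with current run j after K letters and [stop_prob K] = P[xi = K]. *)
Section Chain.
Variables (m' n' : nat).
Local Notation m := m'.+1.
Local Notation n := n'.+1.
Let M : R := INR m.

Lemma M_ge1 : 1 <= M.
Proof. by rewrite /M S_INR; have := pos_INR m'; lra. Qed.

Lemma M_neq0 : M <> 0.
Proof. by have := M_ge1; lra. Qed.

Lemma Mpow_neq0 K : M ^ K <> 0.
Proof. exact: pow_nonzero M_neq0. Qed.

Definition alive_prob (K j : nat) : R := INR (alive_count m' n K j) / M ^ K.
Definition stop_prob (K : nat) : R := INR (stop_count m' n K) / M ^ K.

Lemma alive_prob_ge0 K j : 0 <= alive_prob K j.
Proof. by apply: Rdiv_le_0_compat; [exact: pos_INR | apply: pow_lt; have := M_ge1; lra]. Qed.

Lemma alive_prob0 j : alive_prob 0 j = if j == 0%N then 1 else 0.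
Proof. by rewrite /alive_prob alive_count0 //; case: (j == 0%N) => /=; field. Qed.

Lemma stop_prob0 : stop_prob 0 = 0.
Proof. by rewrite /stop_prob stop_count0 //= /Rdiv Rmult_0_l. Qed.

Lemma alive_prob_S0 K : alive_prob K.+1 0 = (M - 1) / M * sumR n (alive_prob K).
Proof.
rewrite /alive_prob alive_count_S0 // mult_INR INR_sum.
rewrite (sumR_ext (f := fun j => INR (alive_count m' n K j) / M ^ K)
                  (g := fun j => / M ^ K * INR (alive_count m' n K j))) => [|j _];
  last by rewrite /Rdiv Rmult_comm.
rewrite sumR_scale.
have -> : INR m' = M - 1 by rewrite /M S_INR; ring.
by rewrite /=; field; split; [exact: Mpow_neq0 | exact: M_neq0].
Qed.

Lemma alive_prob_SS K j : (j.+1 < n)%N -> alive_prob K.+1 j.+1 = alive_prob K j / M.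
Proof.
by move=> lt_jn; rewrite /alive_prob alive_count_SS //=; field; split;
  [exact: Mpow_neq0 | exact: M_neq0].
Qed.

Lemma stop_prob_S K : stop_prob K.+1 = alive_prob K n' / M.
Proof.
by rewrite /stop_prob /alive_prob stop_count_S //=; field; split;
  [exact: Mpow_neq0 | exact: M_neq0].
Qed.

Lemma chain_step (G : nat -> R) K :
  sumR n (fun j => alive_prob K.+1 j * G j) + stop_prob K.+1 * G n =
  sumR n (fun j => alive_prob K j * ((M - 1) / M * G 0%N + G j.+1 / M)).
Proof.
rewrite sumR_shift alive_prob_S0 stop_prob_S (sumR_ext (k := n')
  (g := fun j => alive_prob K j / M * G j.+1)) => [|j lt_jn]; last by rewrite alive_prob_SS.
rewrite (sumR_ext (f := fun j => alive_prob K j * ((M - 1) / M * G 0%N + G j.+1 / M))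
  (g := fun j => (M - 1) / M * G 0%N * alive_prob K j + alive_prob K j / M * G j.+1))
  => [|j _]; last by field; exact: M_neq0.
rewrite sumR_plus sumR_scale [sumR n (fun j => _ / M * _)]/=; ring.
Qed.

Definition harmonic (F : nat -> nat -> R) : Prop :=
  forall K j, (j < n)%N -> F K j = (M - 1) / M * F K.+1 0%N + F K.+1 j.+1 / M.

(* Optional stopping at the deterministic time K. *)
Lemma harmonic_conservation F : harmonic F -> forall K,
  sum_f_R0 (fun k => F k n * stop_prob k) K + sumR n (fun j => alive_prob K j * F K j)
  = F 0%N 0%N.
Proof.
move=> harmF; elim=> [|K IH].
  rewrite [sum_f_R0 _ 0]/= stop_prob0 sumR_shift alive_prob0 sumR_eq0 => [|j _].
    by rewrite eqxx; ring.
  by rewrite alive_prob0 Rmult_0_l.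
rewrite -IH [sum_f_R0 _ K.+1]/= Rplus_assoc; apply: Rplus_eq_compat_l.
rewrite Rplus_comm (Rmult_comm (F _ n)) (chain_step (F K.+1)).
by apply: sumR_ext => j lt_jn; rewrite (harmF K j lt_jn).
Qed.

(* D_j = m + m^2 + ... + m^j is the expected time needed to build a run of
   length j; H = D_n will turn out to be the mean of xi. *)
Definition reach_time (j : nat) : R := M * INR (geom_sum m j).
Definition mean_time : R := reach_time n.

Lemma reach_time0 : reach_time 0 = 0.
Proof. by rewrite /reach_time geom_sum0 Rmult_0_r. Qed.

Lemma reach_timeS j : reach_time j.+1 = M * (1 + reach_time j).
Proof. by rewrite /reach_time geom_sumS plus_INR mult_INR. Qed.

Lemma reach_time_ge0 j : 0 <= reach_time j.
Proof. by apply: Rmult_le_pos; [have := M_ge1; lra | exact: pos_INR]. Qed.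

Lemma reach_time_lt j : (j < n)%N -> reach_time j + 1 <= mean_time.
Proof.
move=> lt_jn; rewrite /mean_time /reach_time /M -mult_INR -S_INR -addn1 -mult_INR.
by apply/le_INR/leP; rewrite !multE; apply: geom_sum_step_le.
Qed.

Lemma mean_time_ge1 : 1 <= mean_time.
Proof. by have := reach_time_lt (ltn0Sn n'); rewrite reach_time0; lra. Qed.

Lemma decay_ratio_range : 0 <= 1 - / mean_time < 1.
Proof.
have H_ge1 := mean_time_ge1.
have : 0 < / mean_time by apply: Rinv_0_lt_compat; lra.
have : / mean_time <= 1 by rewrite -Rinv_1; apply: Rinv_le_contravar; lra.
lra.
Qed.

(* Alive mass and expected remaining time sum_j a_K(j) (H - D_j): each step
   consumes one unit of the latter, which is at most H times the former, so
   both decay geometrically with ratio 1 - 1/H. *)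
Definition alive_mass (K : nat) : R := sumR n (alive_prob K).
Definition remaining_time (K : nat) : R :=
  sumR n (fun j => alive_prob K j * (mean_time - reach_time j)).

Lemma remaining_timeS K : remaining_time K.+1 = remaining_time K - alive_mass K.
Proof.
have step := chain_step (fun j => mean_time - reach_time j) K.
have stopped : mean_time - reach_time n = 0 by rewrite /mean_time; ring.
rewrite stopped Rmult_0_r Rplus_0_r in step.
rewrite /remaining_time step /alive_mass -sumR_minus.
apply: sumR_ext => j _; rewrite reach_time0 reach_timeS.
by field; exact: M_neq0.
Qed.

Lemma remaining_time_bounds j : (j < n)%N -> 1 <= mean_time - reach_time j <= mean_time.
Proof. by move=> lt_jn; have := reach_time_lt lt_jn; have := reach_time_ge0 j; lra. Qed.

Lemma alive_mass_le_remaining K : alive_mass K <= remaining_time K.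
Proof.
apply: sumR_le => j lt_jn; rewrite -{1}[alive_prob K j]Rmult_1_r.
apply: Rmult_le_compat_l; [exact: alive_prob_ge0 | exact: (remaining_time_bounds lt_jn).1].
Qed.

Lemma remaining_le_alive_mass K : remaining_time K <= mean_time * alive_mass K.
Proof.
rewrite /alive_mass -sumR_scale; apply: sumR_le => j lt_jn; rewrite (Rmult_comm mean_time).
apply: Rmult_le_compat_l; [exact: alive_prob_ge0 | exact: (remaining_time_bounds lt_jn).2].
Qed.

Lemma remaining_time_decay K : remaining_time K <= (1 - / mean_time) ^ K * mean_time.
Proof.
have H_ge1 := mean_time_ge1.
have [ratio_ge0 _] := decay_ratio_range.
elim: K => [|K IH].
  rewrite /remaining_time sumR_shift alive_prob0 sumR_eq0 => [|j _]; last first.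
    by rewrite alive_prob0 Rmult_0_l.
  by rewrite reach_time0 /=; lra.
rewrite remaining_timeS /=.
have mass_ge : remaining_time K / mean_time <= alive_mass K.
  apply: (Rmult_le_reg_r mean_time); first lra.
  rewrite /Rdiv Rmult_assoc Rinv_l ?Rmult_1_r; last lra.
  by rewrite Rmult_comm; exact: remaining_le_alive_mass.
have one_step : remaining_time K - alive_mass K <= (1 - / mean_time) * remaining_time K.
  by rewrite Rmult_minus_distr_r Rmult_1_l Rmult_comm; lra.
rewrite Rmult_assoc; apply: (Rle_trans _ _ _ one_step).
exact: Rmult_le_compat_l.
Qed.

Lemma alive_mass_decay K : alive_mass K <= (1 - / mean_time) ^ K * mean_time.
Proof. exact: Rle_trans (alive_mass_le_remaining K) (remaining_time_decay K). Qed.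

Definition poly_bounded (F : nat -> nat -> R) (C : R) : Prop :=
  forall K j, (j < n)%N -> 0 <= F K j <= C * INR K.+1 ^ 2.

Lemma alive_part_vanishes F C : poly_bounded F C ->
  is_lim_seq (fun K => sumR n (fun j => alive_prob K j * F K j)) 0.
Proof.
move=> boundF.
have C_ge0 : 0 <= C.
  have := boundF 0%N 0%N (ltn0Sn n'); rewrite /= Rmult_1_r Rmult_1_r; lra.
have := is_lim_seq_scal_l _ (C * mean_time) _ (poly_geom_lim decay_ratio_range).
rewrite [Rbar_mult _ _]/= Rmult_0_r => lim_bound.
apply: (is_lim_seq_le_le (fun _ => 0) _ _ _ _ (is_lim_seq_const 0) lim_bound) => K.
have bound_ge0 : 0 <= C * INR K.+1 ^ 2 by apply: Rmult_le_pos => //; exact: pow2_ge_0.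
split.
  apply: sumR_ge0 => j lt_jn.
  by apply: Rmult_le_pos; [exact: alive_prob_ge0 | exact: (boundF K j lt_jn).1].
apply: (Rle_trans _ (sumR n (fun j => C * INR K.+1 ^ 2 * alive_prob K j))).
  apply: sumR_le => j lt_jn; rewrite (Rmult_comm (C * _)).
  by apply: Rmult_le_compat_l; [exact: alive_prob_ge0 | exact: (boundF K j lt_jn).2].
rewrite sumR_scale -/(alive_mass K).
have -> : C * mean_time * (INR K.+1 ^ 2 * (1 - / mean_time) ^ K)
  = C * INR K.+1 ^ 2 * ((1 - / mean_time) ^ K * mean_time) by ring.
exact: Rmult_le_compat_l bound_ge0 (alive_mass_decay K).
Qed.

Lemma harmonic_series F C : harmonic F -> poly_bounded F C ->
  is_series (fun k => F k n * stop_prob k) (F 0%N 0%N).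
Proof.
move=> harmF boundF.
have := is_lim_seq_minus' _ _ _ _ (is_lim_seq_const (F 0%N 0%N)) (alive_part_vanishes boundF).
rewrite Rminus_0_r; apply: is_lim_seq_ext => K.
by rewrite sum_n_Reals -(harmonic_conservation harmF K); ring.
Qed.

(* The two harmonic functions giving the first two moments of xi; the second
   one involves T_j = S_{m,j} through T_{j+1} = m T_j + m (1 + D_j)^2. *)
Definition tree_sum (j : nat) : R := INR (S_tree m j).

Lemma tree_sum0 : tree_sum 0 = 0.
Proof. by rewrite /tree_sum S_tree0. Qed.

Lemma tree_sumS j : tree_sum j.+1 = M * tree_sum j + M * (1 + reach_time j) ^ 2.
Proof.
rewrite /tree_sum S_tree_S -mulnn geom_sumS plus_INR !mult_INR plus_INR mult_INR.
by rewrite /reach_time -/M /=; ring.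
Qed.

Definition first_moment_fn (K j : nat) : R := INR K + mean_time - reach_time j.
Definition second_moment_fn (K j : nat) : R :=
  (INR K - reach_time j) ^ 2 + (M - 1) * (tree_sum n - tree_sum j).

Lemma first_moment_harmonic : harmonic first_moment_fn.
Proof.
move=> K j _; rewrite /first_moment_fn reach_time0 reach_timeS S_INR.
by field; exact: M_neq0.
Qed.

Lemma second_moment_harmonic : harmonic second_moment_fn.
Proof.
move=> K j _; rewrite /second_moment_fn reach_time0 tree_sum0 (tree_sumS j) reach_timeS S_INR.
by field; exact: M_neq0.
Qed.

Definition growth (K : nat) : R := (mean_time + 1) * INR K.+1.
Definition moment_bound : R := (mean_time + 1) ^ 2 + (M - 1) * tree_sum n.

Lemma growth_ge K : 1 <= growth K /\ INR K + mean_time <= growth K.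
Proof.
have := mean_time_ge1; have := pos_INR K; rewrite /growth S_INR; split; nra.
Qed.

Lemma tree_sum_le j : (j <= n)%N -> 0 <= tree_sum j <= tree_sum n.
Proof. by move=> le_jn; split; [exact: pos_INR | apply/le_INR/leP/S_tree_mono]. Qed.

Lemma moment_bound_split K :
  moment_bound * INR K.+1 ^ 2 = growth K ^ 2 + (M - 1) * tree_sum n * INR K.+1 ^ 2.
Proof. by rewrite /moment_bound /growth; ring. Qed.

Lemma first_moment_bounded : poly_bounded first_moment_fn moment_bound.
Proof.
move=> K j lt_jn; rewrite /first_moment_fn moment_bound_split.
have [growth_ge1 growth_ge2] := growth_ge K.
have D_lt := reach_time_lt lt_jn; have D_ge0 := reach_time_ge0 j; have K_ge0 := pos_INR K.
have tree_part_ge0 : 0 <= (M - 1) * tree_sum n * INR K.+1 ^ 2.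
  apply: Rmult_le_pos; [apply: Rmult_le_pos | exact: pow2_ge_0].
    by have := M_ge1; lra.
  exact: (tree_sum_le (leqnn n)).1.
nra.
Qed.

Lemma second_moment_bounded : poly_bounded second_moment_fn moment_bound.
Proof.
move=> K j lt_jn; rewrite /second_moment_fn moment_bound_split.
have [_ growth_ge2] := growth_ge K.
have [T_ge0 T_le] := tree_sum_le (ltnW lt_jn).
have M_ge := M_ge1.
have D_lt := reach_time_lt lt_jn; have D_ge0 := reach_time_ge0 j; have K_ge0 := pos_INR K.
have tree_part_le : (M - 1) * (tree_sum n - tree_sum j) <= (M - 1) * tree_sum n * INR K.+1 ^ 2.
  have sq_ge1 : 1 <= INR K.+1 ^ 2.
    by rewrite -(pow1 2); apply: pow_incr; rewrite S_INR; have := pos_INR K; lra.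
  by rewrite Rmult_assoc; apply: Rmult_le_compat_l; nra.
have square_le : (INR K - reach_time j) ^ 2 <= growth K ^ 2.
  by apply: pow_maj_Rabs; rewrite Rabs_le_between; lra.
have tree_part_ge0 : 0 <= (M - 1) * (tree_sum n - tree_sum j) by apply: Rmult_le_pos; lra.
have := pow2_ge_0 (INR K - reach_time j).
lra.
Qed.

Theorem xi_moments :
  is_series (fun k => INR k * stop_prob k) mean_time /\
  is_series (fun k => (INR k - mean_time) ^ 2 * stop_prob k) ((M - 1) * tree_sum n).
Proof.
split.
  have -> : mean_time = first_moment_fn 0 0 by rewrite /first_moment_fn reach_time0 /=; ring.
  apply: (is_series_ext _ _ _ _ (harmonic_series first_moment_harmonic first_moment_bounded)) => k.
  by apply: Rmult_eq_compat_r; rewrite /first_moment_fn /mean_time; ring.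
have -> : (M - 1) * tree_sum n = second_moment_fn 0 0.
  by rewrite /second_moment_fn reach_time0 tree_sum0 /=; ring.
apply: (is_series_ext _ _ _ _ (harmonic_series second_moment_harmonic second_moment_bounded)) => k.
by apply: Rmult_eq_compat_r; rewrite /second_moment_fn /mean_time; ring.
Qed.

End Chain.

Theorem mainTheorem1 (m n : nat) (hm : (1 <= m)%nat) (hn : (1 <= n)%nat) :
  exists mu : R,
    is_series (fun k : nat => Rmult (INR k) (xi_pmf m n k)) mu /\
    is_series (fun k : nat => Rmult (pow (Rminus (INR k) mu) 2) (xi_pmf m n k))
              (Rmult (INR (m - 1)%nat) (INR (S_tree m n))).
Proof.
case: m hm => [//|m'] _; case: n hn => [//|n'] _.
have [mean var] := xi_moments m' n'.
have pmfE k : xi_pmf m'.+1 n'.+1 k = stop_prob m' n' k.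
  by rewrite /xi_pmf card_first_stop.
exists (mean_time m' n'); split; first by apply: (is_series_ext _ _ _ _ mean) => k; rewrite pmfE.
have -> : INR (m'.+1 - 1) * INR (S_tree m'.+1 n'.+1) = (INR m'.+1 - 1) * tree_sum m' n'.+1.
  by rewrite subSS subn0 S_INR /tree_sum; ring.
by apply: (is_series_ext _ _ _ _ var) => k; rewrite pmfE.
Qed.
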